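(* Let $0<p<1$ and let $\{a_n\}_{n\geq 0}$ be a sequence of non-negative real numbers such that $\{a^p_n\}_{n\geq 0}$ converges to a finite limit $a\in\mathbb{R}$. Then $\left\{\frac{1}{n+1}a^y_n(p)\right\}_{n\geq 0}$ converges to $0$, where $$a^y_n(p)=\sum_{i=\lfloor pn-\epsilon(n)\rfloor+1}^{\lfloor pn+\epsilon(n)\rfloor-1}w_n^i(p)\, a_i.$$
   Context: $a^p_n=\sum_{i=0}^n\binom{n}{i}p^i(1-p)^{n-i}a_i$. For $0<p<1$, $n\in\mathbb{N}$ and integer $i\ge0$, $w_n^i(p)=\sum_{j=i}^n\binom{j}{i}p^i(1-p)^{j-i}$ (an empty sum, i.e. $0$, if $i>n$). $\epsilon(n)=\sqrt{n}\log n$ for $n\geq2$ and $\epsilon(n)=1$ otherwise. *)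

From Stdlib Require Import Reals ZArith.
From Coquelicot Require Import Coquelicot.
Open Scope R_scope.

Definition bern_transform (p : R) (a : nat -> R) (n : nat) : R :=
  sum_f_R0 (fun i => Binomial.C n i * p ^ i * (1 - p) ^ (n - i) * a i) n.

Definition w (n i : nat) (p : R) : R :=
  sum_f_R0 (fun j => if Nat.leb i j then Binomial.C j i * p ^ i * (1 - p) ^ (j - i) else 0) n.

Definition eps (n : nat) : R :=
  if Nat.leb 2 n then sqrt (INR n) * ln (INR n) else 1.

(* a^y_n(p) = sum over integers i with floor(pn - eps n) + 1 <= i <= floor(pn + eps n) - 1
   of w_n^i(p) a_i; only indices i >= 0 (where a_i and w_n^i are defined) are summed. *)
Definition a_y (p : R) (a : nat -> R) (n : nat) : R :=
  let lo := (floor (p * INR n - eps n) + 1)%Z in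
  let hi := (floor (p * INR n + eps n) - 1)%Z in
  sum_f_R0 (fun i => if (Z.leb lo (Z.of_nat i) && Z.leb (Z.of_nat i) hi)%bool
                     then w n i p * a i else 0) (Z.to_nat hi).

From Stdlib Require Import Reals ZArith Lra Lia.
From Coquelicot Require Import Coquelicot.
Open Scope R_scope.

(* Read [bern_transform p f N] as the expectation of [f X] for [X ~ Bin(N, p)].  Then
   [p w_N^i(p) = P(Bin(N+1, p) > i)], and the partial sums of [a^p] up to [N] equal
   [sum_(i <= N) w_N^i(p) a_i].  For [i] within [eps(n)] of [pn], Chebyshev's inequality
   at the ranks [n + D] and [n - D - 1], with [D] about [3 eps(n) / p], gives
   [w_n^i <= 2 (w_(n+D)^i - w_(n-D-1)^i)].  Hence [a^y_n] is at most twice the sum of the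
   [2D + 1] terms [a^p_j], [n - D <= j <= n + D]; as [a^p] is bounded this is
   [O(eps(n)) = o(n)]. *)

Lemma C_ge0 n k : 0 <= Binomial.C n k.
Proof.
  unfold Binomial.C. apply Rle_mult_inv_pos; [apply pos_INR|].
  apply Rmult_lt_0_compat; apply lt_0_INR, lt_O_fact.
Qed.

Lemma bern_weight_ge0 p n k : 0 <= p <= 1 ->
  0 <= Binomial.C n k * p ^ k * (1 - p) ^ (n - k).
Proof.
  intros Hp. apply Rmult_le_pos; [apply Rmult_le_pos|];
    [apply C_ge0 | apply pow_le; lra | apply pow_le; lra].
Qed.

Lemma bern_transform_succ p f N :
  bern_transform p f (S N) =
  (1 - p) * bern_transform p f N + p * bern_transform p (fun k => f (S k)) N.
Proof.
  unfold bern_transform. rewrite decomp_sum by lia. simpl pred.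
  destruct N as [|M].
  - simpl. rewrite !C_n_0, C_n_n. ring.
  - rewrite (decomp_sum (fun k => Binomial.C (S M) k * p ^ k * (1 - p) ^ (S M - k) * f k))
      by lia.
    simpl pred. cbn [sum_f_R0]. rewrite !C_n_0, !C_n_n.
    (* Pascal's rule splits each weight of rank [M+2] into two weights of rank [M+1]. *)
    replace (sum_f_R0 (fun i => Binomial.C (S (S M)) (S i) * p ^ S i
                                * (1 - p) ^ (S (S M) - S i) * f (S i)) M)
      with (sum_f_R0 (fun i => Binomial.C (S M) (S i) * p ^ S i
                                * (1 - p) ^ (S M - S i) * f (S i) * (1 - p)) M
            + sum_f_R0 (fun i => Binomial.C (S M) i * p ^ i
                                * (1 - p) ^ (S M - i) * f (S i) * p) M).
    2:{ rewrite <- sum_plus. apply sum_eq. intros i Hi.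
        rewrite <- (pascal (S M) i) by lia.
        replace (S (S M) - S i)%nat with (S (M - i)) by lia.
        replace (S M - i)%nat with (S (M - i)) by lia.
        replace (S M - S i)%nat with (M - i)%nat by lia. simpl. ring. }
    rewrite <- !scal_sum, !Nat.sub_diag, !Nat.sub_0_r. simpl. ring.
Qed.

Lemma bern_transform_ext p N f g :
  (forall k, (k <= N)%nat -> f k = g k) -> bern_transform p f N = bern_transform p g N.
Proof. intros H. unfold bern_transform. apply sum_eq. intros i Hi. now rewrite H. Qed.

Lemma bern_transform_lin p N a b f g :
  bern_transform p (fun k => a * f k + b * g k) N =
  a * bern_transform p f N + b * bern_transform p g N.
Proof. unfold bern_transform. rewrite !scal_sum, <- sum_plus. apply sum_eq. intros; ring. Qed.

Lemma bern_transform_le p N f g : 0 <= p <= 1 ->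
  (forall k, (k <= N)%nat -> f k <= g k) -> bern_transform p f N <= bern_transform p g N.
Proof.
  intros Hp H. unfold bern_transform. apply sum_Rle. intros i Hi.
  apply Rmult_le_compat_l; [apply bern_weight_ge0 | apply H]; auto.
Qed.

Lemma bern_transform_quadratic p N a b c :
  bern_transform p (fun k => a + b * INR k + c * INR k ^ 2) N =
  a + b * (INR N * p) + c * (INR N * p * (1 - p) + (INR N * p) ^ 2).
Proof.
  revert a b c. induction N as [|N IH]; intros a b c.
  - unfold bern_transform. simpl. rewrite C_n_0. ring.
  - rewrite bern_transform_succ.
    rewrite (bern_transform_ext p N (fun k => a + b * INR (S k) + c * INR (S k) ^ 2)
               (fun k => (a + b + c) + (b + 2 * c) * INR k + c * INR k ^ 2))
      by (intros k _; rewrite S_INR; ring).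
    rewrite !IH, S_INR. ring.
Qed.

Lemma bern_transform_1 p N : bern_transform p (fun _ => 1) N = 1.
Proof.
  rewrite (bern_transform_ext p N _ (fun k => 1 + 0 * INR k + 0 * INR k ^ 2)) by (intros; ring).
  rewrite bern_transform_quadratic. ring.
Qed.

Lemma bern_transform_indicator_chebyshev p N (P : nat -> bool) t : 0 < p < 1 -> 0 < t ->
  (forall k, (k <= N)%nat -> P k = true -> t <= Rabs (INR k - INR N * p)) ->
  bern_transform p (fun k => if P k then 1 else 0) N <= INR N / (4 * t ^ 2).
Proof.
  intros Hp Ht HP.
  assert (Ht2 : 0 < t ^ 2) by (apply pow_lt; lra).
  set (chebyshev k := (INR N * p) ^ 2 / t ^ 2 + (- 2 * INR N * p / t ^ 2) * INR k
                      + (/ t ^ 2) * INR k ^ 2).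
  assert (Hcheb : forall k, chebyshev k = (INR k - INR N * p) ^ 2 / t ^ 2)
    by (intros k; unfold chebyshev; field; lra).
  apply Rle_trans with (bern_transform p chebyshev N).
  - apply bern_transform_le; [lra|]. intros k Hk. rewrite Hcheb.
    destruct (P k) eqn:HPk.
    + apply Rle_div_r; [lra|]. rewrite Rmult_1_l.
      specialize (HP k Hk HPk). rewrite <- (pow2_abs (INR k - INR N * p)).
      apply pow_incr. lra.
    + apply Rmult_le_pos; [apply pow2_ge_0 | apply Rlt_le, Rinv_0_lt_compat; lra].
  - unfold chebyshev. rewrite bern_transform_quadratic.
    assert (p * (1 - p) <= / 4) by (pose proof (pow2_ge_0 (p - / 2)); nra).
    pose proof (pos_INR N).
    replace ((INR N * p) ^ 2 / t ^ 2 + - 2 * INR N * p / t ^ 2 * (INR N * p)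
             + / t ^ 2 * (INR N * p * (1 - p) + (INR N * p) ^ 2))
      with (INR N * (p * (1 - p)) / t ^ 2) by (field; lra).
    replace (INR N / (4 * t ^ 2)) with (INR N * / 4 / t ^ 2) by (field; lra).
    apply Rmult_le_compat_r; [apply Rlt_le, Rinv_0_lt_compat; lra|].
    apply Rmult_le_compat_l; lra.
Qed.

Lemma w_succ N i p :
  w (S N) i p =
  w N i p + (if Nat.leb i (S N) then Binomial.C (S N) i * p ^ i * (1 - p) ^ (S N - i) else 0).
Proof. reflexivity. Qed.

Lemma w_eq0 N i p : (N < i)%nat -> w N i p = 0.
Proof.
  intros H. unfold w. apply sum_eq_R0. intros j Hj.
  destruct (Nat.leb_spec i j); [lia | reflexivity].
Qed.

Lemma w_step_ge0 p N i : 0 <= p <= 1 ->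
  0 <= (if Nat.leb i N then Binomial.C N i * p ^ i * (1 - p) ^ (N - i) else 0).
Proof. intros Hp. destruct (Nat.leb i N); [apply bern_weight_ge0 | lra]; auto. Qed.

Lemma w_ge0 p N i : 0 <= p <= 1 -> 0 <= w N i p.
Proof. intros Hp. apply cond_pos_sum. intros j. now apply w_step_ge0. Qed.

Lemma w_le_w p N1 N2 i : 0 <= p <= 1 -> (N1 <= N2)%nat -> w N1 i p <= w N2 i p.
Proof.
  intros Hp H. induction H as [|N2 H IH]; [lra|].
  rewrite w_succ. pose proof (w_step_ge0 p (S N2) i Hp). lra.
Qed.

Lemma sum_f_R0_delta (g : nat -> R) i M :
  sum_f_R0 (fun k => if Nat.eqb k i then g k else 0) M = if Nat.leb i M then g i else 0.
Proof.
  induction M as [|M IH].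
  - simpl. destruct i; simpl; auto.
  - rewrite tech5, IH.
    destruct (Nat.leb_spec i M), (Nat.leb_spec i (S M)), (Nat.eqb_spec (S M) i);
      try lia; subst; ring.
Qed.

Lemma bern_transform_delta p N i :
  bern_transform p (fun k => if Nat.eqb k i then 1 else 0) N =
  if Nat.leb i N then Binomial.C N i * p ^ i * (1 - p) ^ (N - i) else 0.
Proof.
  rewrite <- (sum_f_R0_delta (fun k => Binomial.C N k * p ^ k * (1 - p) ^ (N - k))).
  apply sum_eq. intros k _. destruct (Nat.eqb k i); ring.
Qed.

Lemma p_w_tail p N i :
  p * w N i p = bern_transform p (fun k => if Nat.leb (S i) k then 1 else 0) (S N).
Proof.
  induction N as [|N IH].
  - unfold w, bern_transform. destruct i as [|[|i]]; simpl; rewrite ?C_n_0, ?(C_n_n 1); ring.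
  - rewrite w_succ, bern_transform_succ.
    rewrite (bern_transform_ext p (S N) (fun k => if Nat.leb (S i) (S k) then 1 else 0)
      (fun k => 1 * (if Nat.leb (S i) k then 1 else 0) + 1 * (if Nat.eqb k i then 1 else 0))).
    2:{ intros k _. change (Nat.leb (S i) (S k)) with (Nat.leb i k).
        destruct (Nat.leb_spec i k), (Nat.leb_spec (S i) k), (Nat.eqb_spec k i);
          try lia; ring. }
    rewrite bern_transform_lin, bern_transform_delta, <- IH. ring.
Qed.

Lemma p_w_le_1 p N i : 0 <= p <= 1 -> p * w N i p <= 1.
Proof.
  intros Hp. rewrite p_w_tail, <- (bern_transform_1 p (S N)) at 1.
  apply bern_transform_le; [exact Hp|]. intros k _. destruct (Nat.leb (S i) k); lra.
Qed.

Lemma p_w_le_upper_tail p N i t : 0 < p < 1 -> 0 < t ->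
  INR (S N) * p + t <= INR (S i) -> p * w N i p <= INR (S N) / (4 * t ^ 2).
Proof.
  intros Hp Ht Hi. rewrite p_w_tail. apply bern_transform_indicator_chebyshev; auto.
  intros k _ Hk. apply Nat.leb_le, le_INR in Hk.
  eapply Rle_trans; [|apply Rle_abs]. lra.
Qed.

Lemma p_w_ge_lower_tail p N i t : 0 < p < 1 -> 0 < t ->
  INR i + t <= INR (S N) * p -> 1 - INR (S N) / (4 * t ^ 2) <= p * w N i p.
Proof.
  intros Hp Ht Hi. rewrite p_w_tail.
  rewrite (bern_transform_ext p (S N) _
             (fun k => 1 * 1 + (-1) * (if Nat.leb (S i) k then 0 else 1)))
    by (intros k _; destruct (Nat.leb (S i) k); ring).
  rewrite bern_transform_lin, bern_transform_1.
  enough (bern_transform p (fun k => if Nat.leb (S i) k then 0 else 1) (S N)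
          <= INR (S N) / (4 * t ^ 2)) by lra.
  rewrite (bern_transform_ext p (S N) _ (fun k => if Nat.ltb k (S i) then 1 else 0))
    by (intros k _; destruct (Nat.leb_spec (S i) k), (Nat.ltb_spec k (S i)); lia || lra).
  apply bern_transform_indicator_chebyshev; auto.
  intros k _ Hk. apply Nat.ltb_lt in Hk. assert (INR k <= INR i) by (apply le_INR; lia).
  eapply Rle_trans; [|apply Rabs_maj2]. lra.
Qed.

Lemma sum_bern_transform p a N :
  sum_f_R0 (bern_transform p a) N = sum_f_R0 (fun i => w N i p * a i) N.
Proof.
  induction N as [|N IH].
  - unfold bern_transform, w. simpl. ring.
  - rewrite tech5, IH.
    rewrite (sum_eq (fun i => w (S N) i p * a i)
               (fun i => w N i p * a i
                         + Binomial.C (S N) i * p ^ i * (1 - p) ^ (S N - i) * a i) (S N)).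
    2:{ intros i Hi. rewrite w_succ. destruct (Nat.leb_spec i (S N)); [ring | lia]. }
    rewrite sum_plus, tech5, (w_eq0 N (S N)) by lia. unfold bern_transform. ring.
Qed.

Lemma sum_f_R0_eq_of_zero (f : nat -> R) n1 n2 : (n1 <= n2)%nat ->
  (forall k, (n1 < k <= n2)%nat -> f k = 0) -> sum_f_R0 f n2 = sum_f_R0 f n1.
Proof.
  intros H. induction H as [|n2 H IH]; intros Hz; [reflexivity|].
  rewrite tech5, Hz, IH by (lia || (intros; apply Hz; lia)). ring.
Qed.

Lemma sum_f_R0_le_ext (f g : nat -> R) n1 n2 : (n1 <= n2)%nat ->
  (forall k, (k <= n1)%nat -> f k <= g k) -> (forall k, (n1 < k <= n2)%nat -> 0 <= g k) ->
  sum_f_R0 f n1 <= sum_f_R0 g n2.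
Proof.
  intros H. induction H as [|n2 H IH]; intros Hfg Hg; [now apply sum_Rle|].
  rewrite tech5. assert (0 <= g (S n2)) by (apply Hg; lia).
  assert (sum_f_R0 f n1 <= sum_f_R0 g n2) by (apply IH; auto; intros; apply Hg; lia). lra.
Qed.

Lemma sum_f_R0_sub_le (f : nat -> R) n1 n2 M : (n1 <= n2)%nat ->
  (forall j, (n1 < j <= n2)%nat -> f j <= M) ->
  sum_f_R0 f n2 - sum_f_R0 f n1 <= INR (n2 - n1) * M.
Proof.
  intros H. induction H as [|n2 H IH]; intros Hb.
  - rewrite Nat.sub_diag. simpl. lra.
  - rewrite tech5. replace (S n2 - n1)%nat with (S (n2 - n1)) by lia. rewrite S_INR.
    assert (f (S n2) <= M) by (apply Hb; lia).
    assert (sum_f_R0 f n2 - sum_f_R0 f n1 <= INR (n2 - n1) * M)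
      by (apply IH; intros; apply Hb; lia).
    lra.
Qed.

Lemma floor_spec x : IZR (floor x) <= x < IZR (floor x) + 1.
Proof. unfold floor. now destruct (floor_ex x). Qed.

Lemma eps_lower_bounds n : (3 <= n)%nat -> 1 <= eps n /\ INR n <= eps n ^ 2.
Proof.
  intros Hn. unfold eps. destruct (Nat.leb_spec 2 n); [|lia].
  assert (H3 : 3 <= INR n) by (apply (le_INR 3) in Hn; simpl in Hn; lra).
  assert (Hl : 1 <= ln (INR n)).
  { rewrite <- ln_exp with 1. apply ln_le; [apply exp_pos|]. pose proof exp_le_3. lra. }
  assert (Hs : 1 <= sqrt (INR n)) by (rewrite <- sqrt_1; apply sqrt_le_1; lra).
  assert (Hss : sqrt (INR n) * sqrt (INR n) = INR n) by (apply sqrt_sqrt; lra).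
  split; [nra|].
  replace ((sqrt (INR n) * ln (INR n)) ^ 2)
    with (sqrt (INR n) * sqrt (INR n) * (ln (INR n) * ln (INR n))) by ring.
  rewrite Hss. assert (1 <= ln (INR n) * ln (INR n)) by nra. nra.
Qed.

Lemma eps_le_ln_sqrt n : (2 <= n)%nat ->
  0 <= eps n / (INR n + 1) <= 2 * (ln (sqrt (INR n)) / sqrt (INR n)).
Proof.
  intros Hn. unfold eps. destruct (Nat.leb_spec 2 n); [|lia].
  assert (H2 : 2 <= INR n) by (apply (le_INR 2) in Hn; simpl in Hn; lra).
  assert (Hs : 0 < sqrt (INR n)) by (apply sqrt_lt_R0; lra).
  assert (Hss : sqrt (INR n) * sqrt (INR n) = INR n) by (apply sqrt_sqrt; lra).
  assert (Hl : ln (INR n) = 2 * ln (sqrt (INR n))).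
  { rewrite <- Hss at 1. rewrite ln_mult by lra. ring. }
  assert (Hl0 : 0 <= ln (sqrt (INR n))).
  { rewrite <- ln_1. apply ln_le; [lra|]. rewrite <- sqrt_1. apply sqrt_le_1; lra. }
  rewrite Hl. split.
  - apply Rmult_le_pos; [apply Rmult_le_pos; lra | apply Rlt_le, Rinv_0_lt_compat; lra].
  - unfold Rdiv.
    apply Rle_trans
      with (sqrt (INR n) * (2 * ln (sqrt (INR n))) * / (sqrt (INR n) * sqrt (INR n))).
    + apply Rmult_le_compat_l; [apply Rmult_le_pos; lra|].
      apply Rinv_le_contravar; nra.
    + right. field. lra.
Qed.

Lemma is_lim_seq_eps_div : is_lim_seq (fun n => eps n / (INR n + 1)) 0.
Proof.
  assert (Hsqrt : is_lim_seq (fun n => sqrt (INR n)) p_infty).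
  { apply (is_lim_comp_seq sqrt INR p_infty p_infty).
    - apply (is_lim_sqrt_p (fun x => x)), is_lim_id.
    - exists 0%nat. intros n _. discriminate.
    - apply is_lim_seq_INR. }
  assert (Hln : is_lim_seq (fun n => ln (sqrt (INR n)) / sqrt (INR n)) 0).
  { apply (is_lim_comp_seq (fun y => ln y / y) (fun n => sqrt (INR n)) p_infty 0).
    - apply is_lim_div_ln_p.
    - exists 0%nat. intros n _. discriminate.
    - exact Hsqrt. }
  apply (is_lim_seq_le_le_loc (fun _ => 0) _
           (fun n => 2 * (ln (sqrt (INR n)) / sqrt (INR n)))).
  - exists 2%nat. intros n Hn. apply eps_le_ln_sqrt. lia.
  - apply is_lim_seq_const.
  - pose proof (is_lim_seq_scal_l _ 2 _ Hln) as H. simpl in H. now rewrite Rmult_0_r in H.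
Qed.

(* Chebyshev with deviation [2e]: [p w^i] is at least [3/4] at rank [n + D] and at most
   [1/4] at rank [n - D - 1], while [p w_n^i <= 1]. *)
Lemma w_le_window_diff p n D e i :
  0 < p < 1 -> 0 < e -> INR n <= e ^ 2 -> (D + 1 <= n)%nat -> 3 * e <= p * INR D ->
  p * INR n - e < INR i -> INR i <= p * INR n + e - 1 ->
  w n i p <= 2 * (w (n + D) i p - w (n - D - 1) i p).
Proof.
  intros Hp He Hne HDn HpD Hlo Hhi.
  assert (HDn' : INR D + 1 <= INR n) by (rewrite <- S_INR; apply le_INR; lia).
  assert (Hhigh : INR (S (n + D)) = INR n + INR D + 1) by (rewrite S_INR, plus_INR; ring).
  assert (Hlow : INR (S (n - D - 1)) = INR n - INR D).
  { replace (S (n - D - 1)) with (n - D)%nat by lia. now rewrite minus_INR by lia. }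
  assert (He2 : 0 < 4 * (2 * e) ^ 2) by nra.
  assert (Hn : p * w n i p <= 1) by (apply p_w_le_1; lra).
  assert (Hup : 3 / 4 <= p * w (n + D) i p).
  { eapply Rle_trans; [|apply (p_w_ge_lower_tail p (n + D) i (2 * e)); rewrite ?Hhigh; nra].
    enough (INR (S (n + D)) / (4 * (2 * e) ^ 2) <= 1 / 4) by lra.
    apply Rle_div_l; [lra|]. rewrite Hhigh. nra. }
  assert (Hdown : p * w (n - D - 1) i p <= 1 / 4).
  { eapply Rle_trans; [apply (p_w_le_upper_tail p (n - D - 1) i (2 * e));
                       rewrite ?Hlow, ?S_INR; nra|].
    apply Rle_div_l; [lra|]. rewrite Hlow. nra. }
  apply (Rmult_le_reg_l p); lra.
Qed.

Lemma a_y_ge0 p a n : 0 < p < 1 -> (forall k, 0 <= a k) -> 0 <= a_y p a n.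
Proof.
  intros Hp Ha. apply cond_pos_sum. intros k.
  destruct (_ && _)%bool; [apply Rmult_le_pos; [apply w_ge0; lra | apply Ha] | lra].
Qed.

Lemma a_y_le_block p a n D :
  0 < p < 1 -> (forall k, 0 <= a k) -> (3 <= n)%nat -> (D + 1 <= n)%nat ->
  3 * eps n <= p * INR D ->
  a_y p a n <= 2 * (sum_f_R0 (bern_transform p a) (n + D)
                    - sum_f_R0 (bern_transform p a) (n - D - 1)).
Proof.
  intros Hp Ha Hn HDn HpD.
  destruct (eps_lower_bounds n Hn) as [He1 Hne].
  assert (HD : eps n <= INR D) by nra.
  set (e := eps n) in *. set (N := (n + D)%nat). set (n' := (n - D - 1)%nat).
  assert (Hw : forall k, 0 <= (w N k p - w n' k p) * a k).
  { intros k. apply Rmult_le_pos; [|apply Ha].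
    pose proof (w_le_w p n' N k ltac:(lra) ltac:(unfold n', N; lia)). lra. }
  pose proof (floor_spec (p * INR n - e)) as Hfloor_lo.
  pose proof (floor_spec (p * INR n + e)) as Hfloor_hi.
  assert (HhiN : (Z.to_nat (floor (p * INR n + e) - 1) <= N)%nat).
  { assert (IZR (floor (p * INR n + e) - 1) < IZR (Z.of_nat N) + 1).
    { assert (p * INR n <= INR n) by (pose proof (pos_INR n); nra).
      rewrite minus_IZR, <- INR_IZR_INZ. unfold N. rewrite plus_INR. lra. }
    rewrite <- plus_IZR in H. apply lt_IZR in H. lia. }
  unfold a_y. fold e. cbv zeta.
  apply Rle_trans with (sum_f_R0 (fun i => (w N i p * a i - w n' i p * a i) * 2) N).
  { apply sum_f_R0_le_ext; [exact HhiN| |intros k _; specialize (Hw k); lra].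
    intros k _. specialize (Hw k). pose proof (Ha k).
    destruct (_ && _)%bool eqn:Hk; [|lra].
    apply andb_prop in Hk as [Hk1 Hk2]. apply Z.leb_le, IZR_le in Hk1, Hk2.
    rewrite <- INR_IZR_INZ in Hk1, Hk2. rewrite plus_IZR in Hk1. rewrite minus_IZR in Hk2.
    assert (w n k p <= 2 * (w N k p - w n' k p))
      by (apply (w_le_window_diff p n D e k); lra || lia).
    nra. }
  rewrite <- scal_sum, minus_sum.
  rewrite (sum_f_R0_eq_of_zero (fun i => w n' i p * a i) n' N)
    by (unfold n', N; lia || (intros k Hk; rewrite w_eq0 by lia; ring)).
  rewrite <- !sum_bern_transform. lra.
Qed.

Lemma a_y_le_eps_eventually p a M :
  0 < p < 1 -> (forall k, 0 <= a k) -> 0 <= M ->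
  (exists N0, forall j, (N0 <= j)%nat -> bern_transform p a j <= M) ->
  exists N, forall n, (N <= n)%nat -> a_y p a n <= 2 * M * (6 / p + 3) * eps n.
Proof.
  intros Hp Ha HM [N0 HN0].
  assert (Hp24 : 0 < p / 24) by lra.
  destruct (proj2 (is_lim_seq_spec _ _) is_lim_seq_eps_div (mkposreal _ Hp24)) as [N1 HN1].
  exists (N1 + 2 * N0 + 10)%nat. intros n Hn.
  destruct (eps_lower_bounds n ltac:(lia)) as [He1 Hne].
  assert (HnR : INR (N1 + 2 * N0 + 10) <= INR n) by (apply le_INR; lia).
  rewrite !plus_INR, mult_INR in HnR. simpl in HnR.
  pose proof (pos_INR N0). pose proof (pos_INR N1).
  assert (Hen : eps n < p / 24 * (INR n + 1)).
  { specialize (HN1 n ltac:(lia)). simpl in HN1. rewrite Rminus_0_r in HN1.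
    apply Rle_lt_trans with (1 := Rle_abs _) in HN1.
    apply (Rlt_div_l (eps n) (p / 24) (INR n + 1)) in HN1; lra. }
  set (x := 3 * eps n / p).
  assert (Hx : p * x = 3 * eps n) by (unfold x; field; lra).
  destruct (archimed x) as [Hup1 Hup2].
  set (D := Z.to_nat (up x)).
  assert (HD : INR D = IZR (up x)).
  { unfold D. rewrite INR_IZR_INZ, Z2Nat.id; [reflexivity|].
    apply le_IZR. assert (0 < x) by (unfold x; apply Rdiv_lt_0_compat; lra). lra. }
  assert (HDn : (D + N0 + 1 < n)%nat).
  { apply INR_lt. rewrite !plus_INR, HD. simpl. nra. }
  eapply Rle_trans.
  { apply (a_y_le_block p a n D); try lia; auto. rewrite HD, <- Hx.
    apply Rmult_le_compat_l; lra. }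
  eapply Rle_trans.
  { apply Rmult_le_compat_l; [lra|].
    apply (sum_f_R0_sub_le _ _ _ M); [lia|].
    intros j Hj. apply HN0. lia. }
  replace (n + D - (n - D - 1))%nat with (2 * D + 1)%nat by lia.
  rewrite plus_INR, mult_INR, HD. simpl.
  replace (2 * M * (6 / p + 3) * eps n) with (2 * ((2 * x + 3 * eps n) * M))
    by (unfold x; field; lra).
  apply Rmult_le_compat_l; [lra|]. apply Rmult_le_compat_r; lra.
Qed.

Theorem lemma8 (p : R) (a : nat -> R) (l : R) :
  0 < p < 1 ->
  (forall n, 0 <= a n) ->
  is_lim_seq (fun n => bern_transform p a n) l ->
  is_lim_seq (fun n => / (INR n + 1) * a_y p a n) 0.
Proof.
  intros Hp Ha Hl.
  set (M := Rabs l + 1).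
  assert (Hbounded : exists N0, forall j, (N0 <= j)%nat -> bern_transform p a j <= M).
  { destruct (proj2 (is_lim_seq_spec _ _) Hl (mkposreal 1 Rlt_0_1)) as [N0 HN0].
    exists N0. intros j Hj. specialize (HN0 j Hj). simpl in HN0.
    pose proof (Rle_abs (bern_transform p a j - l)). pose proof (Rle_abs l).
    unfold M. lra. }
  assert (HM : 0 <= M) by (pose proof (Rabs_pos l); unfold M; lra).
  destruct (a_y_le_eps_eventually p a M Hp Ha HM Hbounded) as [N HN].
  set (c := 2 * M * (6 / p + 3)).
  apply (is_lim_seq_le_le_loc (fun _ => 0) _ (fun n => c * (eps n / (INR n + 1)))).
  - exists N. intros n Hn.
    assert (Hn1 : 0 < / (INR n + 1)) by (apply Rinv_0_lt_compat; pose proof (pos_INR n); lra).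
    split; [apply Rmult_le_pos; [lra | now apply a_y_ge0]|].
    replace (c * (eps n / (INR n + 1))) with (/ (INR n + 1) * (c * eps n))
      by (unfold Rdiv; ring).
    apply Rmult_le_compat_l; [lra | now apply HN].
  - apply is_lim_seq_const.
  - pose proof (is_lim_seq_scal_l _ c _ is_lim_seq_eps_div) as H. simpl in H.
    now rewrite Rmult_0_r in H.
Qed.
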